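(* Let $(\Omega,\mathcal F)$ be a measurable space, $\mathcal X$ the set of bounded measurable functions, $w$ a continuous capacity, and $\alpha\in(0,1)$. If $\mathrm{ES}^w_\alpha$ is a coherent risk measure, then $$\mathrm{ES}^w_\alpha(X)=\sup\Big\{\mathbb E^{\mathbb Q}[X]:\mathbb Q\in\mathcal P_0,\ \mathbb Q(A)\le w(A)/\alpha\ \text{for all }A\in\mathcal F\Big\},\qquad X\in\mathcal X,$$ where $\mathcal P_0$ is the set of all (countably additive) probability measures on $(\Omega,\mathcal F)$.
   Context: A capacity is an increasing function $w:\mathcal F\to\mathbb R$ with $w(\varnothing)=0$, $w(\Omega)=1$; it is continuous if $w(A_n)\to0$ whenever $A_n\in\mathcal F$ decrease to $\varnothing$. $\mathrm{VaR}^w_t(X)=\inf\{x\in\mathbb R:w(X\ge x)\le t\}$ and $\mathrm{ES}^w_\alpha(X)=\frac1\alpha\int_0^\alpha\mathrm{VaR}^w_t(X)\,\mathrm dt$. A coherent risk measure is a mapping $\mathcal X\to\mathbb R$ that is monotone, translation invariant ($\mathcal R(X+c)=\mathcal R(X)+c$), positively homogeneous and convex. *)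

From HB Require Import structures.
From mathcomp Require Import all_boot all_order all_algebra.
From mathcomp Require Import all_classical all_reals all_analysis.
Set Implicit Arguments. Unset Strict Implicit. Unset Printing Implicit Defensive.
Import Order.TTheory GRing.Theory Num.Theory.
Import numFieldNormedType.Exports.
Local Open Scope classical_set_scope.
Local Open Scope ring_scope.

Section defs.
Context {d : measure_display} {T : measurableType d} {R : realType}.

Definition bdd_meas (X : T -> R) : Prop :=
  measurable_fun setT X /\ exists M : R, forall t, `|X t| <= M.

Definition capacity (w : set T -> R) : Prop :=
  [/\ w set0 = 0, w setT = 1 &
      forall A B, measurable A -> measurable B -> A `<=` B -> w A <= w B].

Definition continuous_capacity (w : set T -> R) : Prop :=
  capacity w /\
  forall A : nat -> set T, (forall n, measurable (A n)) ->
    (forall n, A n.+1 `<=` A n) -> \bigcap_n A n = set0 ->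
    w (A n) @[n --> \oo] --> (0 : R).

Definition VaR (w : set T -> R) (t : R) (X : T -> R) : R :=
  inf [set x : R | w [set om | x <= X om] <= t].

Definition ES (w : set T -> R) (alpha : R) (X : T -> R) : R :=
  (Rintegral lebesgue_measure `]0, alpha[ (fun t => VaR w t X)) / alpha.

Definition coherent (rho : (T -> R) -> R) : Prop :=
  [/\ (forall X Y, bdd_meas X -> bdd_meas Y -> (forall t, X t <= Y t) ->
          rho X <= rho Y),
      (forall X (c : R), bdd_meas X -> rho (fun t => X t + c) = rho X + c),
      (forall X (l : R), bdd_meas X -> 0 < l -> rho (fun t => l * X t) = l * rho X) &
      (forall X Y (l : R), bdd_meas X -> bdd_meas Y -> 0 <= l <= 1 ->
          rho (fun t => l * X t + (1 - l) * Y t) <= l * rho X + (1 - l) * rho Y)].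
End defs.

From HB Require Import structures.
From mathcomp Require Import all_boot all_order all_algebra.
From mathcomp Require Import all_classical all_reals all_analysis.
From mathcomp Require Import ring lra measurable_realfun.
Import Order.TTheory GRing.Theory Num.Theory.
Import numFieldNormedType.Exports.
Local Open Scope classical_set_scope.
Local Open Scope ring_scope.

Set Implicit Arguments. Unset Strict Implicit. Unset Printing Implicit Defensive.

(* Coherence makes ES^w_alpha sublinear on bounded measurable functions, so by
   Hahn-Banach every X has a linear functional l <= ES with l X = ES X.  Such an
   l is monotone and fixes constants, and A |-> l 1_A is a finitely additive
   probability bounded by ES 1_A <= w A / alpha; continuity of w from above then
   makes it countably additive, and l is integration against this probability.
   Conversely, for a probability Q <= w / alpha, discretising X on a grid of mesh
   e bounds E_Q[X] by a sum of Q-masses of level sets, while ES X dominates the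
   same sum with each mass Q A replaced by min (w A) alpha / alpha >= Q A. *)

(** * Hahn-Banach for sublinear functionals *)

Section HahnBanach.
Variables (R : realType) (V : lmodType R) (B : set V) (p : V -> R).
Hypothesis B0 : B 0.
Hypothesis BD : forall x y, B x -> B y -> B (x + y).
Hypothesis BZ : forall a x, B x -> B (a *: x).
Hypothesis pD : forall x y, B x -> B y -> p (x + y) <= p x + p y.
Hypothesis pZ : forall a x, 0 < a -> B x -> p (a *: x) = a * p x.

Let BN x : B x -> B (- x).
Proof. by move=> Bx; rewrite -scaleN1r; exact: BZ. Qed.

Definition dominated_sublinear (q : V -> R) :=
  [/\ forall x y, B x -> B y -> q (x + y) <= q x + q y,
      forall a x, 0 < a -> B x -> q (a *: x) <= a * q x &
      forall x, B x -> q x <= p x].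

Lemma dominated_sublinear_self : dominated_sublinear p.
Proof. by split=> // a x a0 Bx; rewrite pZ. Qed.

Section Dominated.
Variable q : V -> R.
Hypothesis qdom : dominated_sublinear q.

Lemma dominated_sublinear0 : q 0 = 0.
Proof.
have p0 : p 0 = 0 by have := pZ (ltr0Sn R 1) B0; rewrite scaler0; lra.
case: qdom => _ qZ qp; have := qp _ B0; have := qZ _ _ (ltr0Sn R 1) B0.
by rewrite scaler0 p0; lra.
Qed.

Lemma dominated_sublinear_addN x : B x -> 0 <= q x + q (- x).
Proof.
case: qdom => qD _ _ Bx; rewrite -dominated_sublinear0 -(subrr x).
exact: qD (BN Bx).
Qed.

Lemma dominated_sublinearZ a x : 0 <= a -> B x -> q (a *: x) = a * q x.
Proof.
case: qdom => _ qZ _; rewrite le_eqVlt => /predU1P[<- _|a0 Bx].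
  by rewrite scale0r mul0r dominated_sublinear0.
have ia : 0 < a^-1 by rewrite invr_gt0.
apply/le_anti; rewrite qZ //=.
have := qZ _ _ ia (BZ a Bx); rewrite scalerA mulVf ?gt_eqF // scale1r.
by rewrite -(ler_pM2l a0) mulrA mulfV ?gt_eqF // mul1r.
Qed.

(* Shaving [q] along the ray [t y] (t >= 0); a minimal dominated sublinear
   functional is a fixed point of every such shaving, which forces linearity. *)
Definition qshift (y x : V) : R :=
  inf [set q (x + t *: y) - t * q y | t in [set t : R | 0 <= t]].

Section Shift.
Variable y : V.
Hypothesis By : B y.

Lemma qshift_lb x t : B x -> 0 <= t -> - q (- x) <= q (x + t *: y) - t * q y.
Proof.
move=> Bx t0; case: qdom => qD _ _.
have := qD _ _ (BD Bx (BZ t By)) (BN Bx).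
by rewrite addrAC subrr add0r dominated_sublinearZ //; lra.
Qed.

Lemma qshift_le x t : B x -> 0 <= t -> qshift y x <= q (x + t *: y) - t * q y.
Proof.
move=> Bx t0; apply: ge_inf; last by exists t.
by exists (- q (- x)) => _ [s s0 <-]; exact: qshift_lb.
Qed.

Lemma qshift_le_id x : B x -> qshift y x <= q x.
Proof. by move=> Bx; have := qshift_le Bx (lexx 0); rewrite scale0r addr0 mul0r subr0. Qed.

Lemma qshiftN : qshift y (- y) <= - q y.
Proof.
have := qshift_le (BN By) ler01.
by rewrite scale1r addNr dominated_sublinear0 mul1r sub0r.
Qed.

Lemma qshift_dominated : dominated_sublinear (qshift y).
Proof.
have [qD _ qp] := qdom.
have shift0 x : [set q (x + t *: y) - t * q y | t in [set t : R | 0 <= t]] !=set0.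
  by exists (q (x + 0 *: y) - 0 * q y), 0; rewrite //= lexx.
split.
- move=> x1 x2 Bx1 Bx2.
  have split_le t1 t2 : 0 <= t1 -> 0 <= t2 -> qshift y (x1 + x2) <=
      (q (x1 + t1 *: y) - t1 * q y) + (q (x2 + t2 *: y) - t2 * q y).
    move=> t10 t20; have := qshift_le (BD Bx1 Bx2) (addr_ge0 t10 t20).
    have := qD _ _ (BD Bx1 (BZ t1 By)) (BD Bx2 (BZ t2 By)).
    by rewrite addrACA -scalerDl; lra.
  suff : qshift y (x1 + x2) - qshift y x1 <= qshift y x2 by lra.
  apply: lb_le_inf (shift0 x2) _ => _ [t2 t20 <-].
  suff : qshift y (x1 + x2) - (q (x2 + t2 *: y) - t2 * q y) <= qshift y x1 by lra.
  apply: lb_le_inf (shift0 x1) _ => _ [t1 t10 <-].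
  by have := split_le _ _ t10 t20; lra.
- move=> a x a0 Bx; rewrite -ler_pdivrMl //.
  apply: lb_le_inf (shift0 x) _ => _ [t t0 <-]; rewrite ler_pdivrMl //.
  have := qshift_le (BZ a Bx) (mulr_ge0 (ltW a0) t0).
  have Bxty := BD Bx (BZ t By).
  rewrite -scalerA -scalerDr dominated_sublinearZ ?(ltW a0) //.
  by rewrite mulrBr mulrA.
- by move=> x Bx; exact: le_trans (qshift_le_id Bx) (qp _ Bx).
Qed.

End Shift.

Lemma dominated_sublinear_linear :
  (forall y x, B y -> B x -> q x <= qshift y x) ->
  (forall x y, B x -> B y -> q (x + y) = q x + q y) /\
  (forall a x, B x -> q (a *: x) = a * q x).
Proof.
move=> qmin; have [qD _ _] := qdom.
have qN y : B y -> q (- y) = - q y.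
  move=> By; apply/le_anti; rewrite (le_trans (qmin _ _ By (BN By))) ?qshiftN //=.
  by have := dominated_sublinear_addN By; lra.
split=> [x y Bx By|a x Bx].
  apply/le_anti; rewrite qD //=.
  by have := qD _ _ (BN Bx) (BN By); rewrite -opprD !qN //; [lra|exact: BD].
have [a0|a0] := leP 0 a; first exact: dominated_sublinearZ.
have Bax := BZ (- a) Bx.
by rewrite -[a]opprK scaleNr qN // dominated_sublinearZ ?oppr_ge0 ?(ltW a0) // !mulNr.
Qed.

End Dominated.

Lemma dominated_sublinear_inf_le (A : set (V -> R)) q x :
  (forall q, A q -> dominated_sublinear q) -> A q -> B x ->
  inf [set r x | r in A] <= q x.
Proof.
move=> Adom Aq Bx; apply: ge_inf; last by exists q.
exists (- p (- x)) => _ [r Ar <-]; have [_ _ rp] := Adom _ Ar.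
by have := dominated_sublinear_addN (Adom _ Ar) Bx; have := rp _ (BN Bx); lra.
Qed.

Lemma dominated_sublinear_inf (A : set (V -> R)) :
  A !=set0 -> (forall q, A q -> dominated_sublinear q) ->
  (forall q r, A q -> A r -> (forall x, B x -> q x <= r x) \/ (forall x, B x -> r x <= q x)) ->
  dominated_sublinear (fun x => inf [set r x | r in A]).
Proof.
move=> [q0 Aq0] Adom Atot.
have ne x : [set r x | r in A] !=set0 by exists (q0 x); exists q0.
split.
- move=> x y Bx By.
  have step q r : A q -> A r -> inf [set s (x + y) | s in A] <= q x + r y.
    move=> Aq Ar; have [qr|rq] := Atot _ _ Aq Ar.
    + have [qD _ _] := Adom _ Aq; apply: le_trans (dominated_sublinear_inf_le Adom Aq (BD Bx By)) _.
      by apply: le_trans (qD _ _ Bx By) _; have := qr _ By; lra.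
    + have [rD _ _] := Adom _ Ar; apply: le_trans (dominated_sublinear_inf_le Adom Ar (BD Bx By)) _.
      by apply: le_trans (rD _ _ Bx By) _; have := rq _ Bx; lra.
  suff : inf [set s (x + y) | s in A] - inf [set s x | s in A] <= inf [set s y | s in A] by lra.
  apply: lb_le_inf (ne y) _ => _ [r Ar <-].
  suff : inf [set s (x + y) | s in A] - r y <= inf [set s x | s in A] by lra.
  by apply: lb_le_inf (ne x) _ => _ [q Aq <-]; have := step _ _ Aq Ar; lra.
- move=> a x a0 Bx; rewrite -ler_pdivrMl //.
  apply: lb_le_inf (ne x) _ => _ [q Aq <-]; rewrite ler_pdivrMl //.
  have [_ qZ _] := Adom _ Aq.
  exact: le_trans (dominated_sublinear_inf_le Adom Aq (BZ a Bx)) (qZ _ _ a0 Bx).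
- move=> x Bx; have [_ _ q0p] := Adom _ Aq0.
  exact: le_trans (dominated_sublinear_inf_le Adom Aq0 Bx) (q0p _ Bx).
Qed.

(* The side condition at [- x0] survives to the minimal element and yields
   [l x0 >= p x0]. *)
Lemma exists_minimal_dominated x0 : B x0 ->
  exists2 l, dominated_sublinear l /\ l (- x0) <= - p x0 &
  forall q, dominated_sublinear q -> q (- x0) <= - p x0 ->
    (forall x, B x -> q x <= l x) -> forall x, B x -> l x <= q x.
Proof.
move=> Bx0.
pose S := {q : V -> R | dominated_sublinear q /\ q (- x0) <= - p x0}.
pose below (r s : S) := `[< forall x, B x -> sval s x <= sval r x >].
have pdom := dominated_sublinear_self.
have s0 : S := exist _ _ (conj (qshift_dominated pdom Bx0) (qshiftN pdom Bx0)).
have [[l lS] lmin] : exists s : S, premaximal below s.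
  apply: (ZL_preorder s0) => [s|r s t /asboolP rs /asboolP st|A Atot].
  - exact/asboolP.
  - by apply/asboolP => x Bx; exact: le_trans (st _ Bx) (rs _ Bx).
  have [[s As]|A0] := pselect (A !=set0); last first.
    by exists s0 => s As; exfalso; apply: A0; exists s.
  pose A' := [set sval s | s in A].
  have A'dom q : A' q -> dominated_sublinear q by move=> [r _ <-]; case: (svalP r).
  have A'tot q r : A' q -> A' r ->
      (forall x, B x -> q x <= r x) \/ (forall x, B x -> r x <= q x).
    move=> [q' Aq' <-] [r' Ar' <-].
    by have [/asboolP|/asboolP] := Atot _ _ Aq' Ar'; [right|left].
  have Aqs : A' (sval s) by exists s.
  have infx0 : inf [set q (- x0) | q in A'] <= - p x0.
    by apply: le_trans (dominated_sublinear_inf_le A'dom Aqs (BN Bx0)) _; case: (svalP s).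
  pose m x := inf [set q x | q in A'].
  exists (exist _ m (conj (dominated_sublinear_inf (ex_intro _ _ Aqs) A'dom A'tot) infx0)).
  move=> r Ar; apply/asboolP => x Bx /=.
  by apply: dominated_sublinear_inf_le A'dom _ Bx; exists r.
exists l => // q qdom qx0 ql.
have : below (exist _ l lS) (exist _ q (conj qdom qx0)) by apply/asboolP.
by move=> /lmin /asboolP.
Qed.

Theorem hahn_banach x0 : B x0 -> exists l : V -> R,
  [/\ forall x y, B x -> B y -> l (x + y) = l x + l y,
      forall a x, B x -> l (a *: x) = a * l x,
      forall x, B x -> l x <= p x & l x0 = p x0].
Proof.
move=> Bx0; have [l [ldom lx0] lmin] := exists_minimal_dominated Bx0.
have [lD lZ] : (forall x y, B x -> B y -> l (x + y) = l x + l y) /\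
               (forall a x, B x -> l (a *: x) = a * l x).
  apply: (dominated_sublinear_linear ldom) => y x By; apply: lmin.
  - exact: qshift_dominated.
  - exact: le_trans (qshift_le_id ldom By (BN Bx0)) lx0.
  - exact: qshift_le_id.
case: (ldom) => _ _ lp.
exists l; split => //; apply/le_anti; rewrite lp //=.
by move: (lx0); rewrite -scaleN1r lZ // mulN1r; lra.
Qed.

End HahnBanach.

(** * Grid approximation of bounded functions *)

Lemma sum_indicator_le (R : realType) (m : nat) (P : pred nat) (z : R) : 0 <= z ->
  (forall i, (i < m)%N -> P i -> i.+1%:R <= z) -> \sum_(i < m) (P i)%:R <= z.
Proof.
elim: m => [|m IH] z0 hP; first by rewrite big_ord0.
rewrite big_ord_recr /=; case: (boolP (P m)) => Pm; last first.
  by rewrite addr0 IH // => i im; apply: hP; exact: ltnW.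
have sum_le : \sum_(i < m) ((P i)%:R : R) <= m%:R.
  have -> : (m%:R : R) = \sum_(i < m) 1 by rewrite sumr_const card_ord.
  by apply: ler_sum => i _; rewrite lern1 leq_b1.
by apply: le_trans (hP m (ltnSn m) Pm); rewrite -natr1 lerD2r.
Qed.

Lemma sum_indicator_ge (R : realType) (m : nat) (z : R) : z <= m%:R ->
  z - 1 <= \sum_(i < m) (((i.+1)%:R <= z)%R : nat)%:R.
Proof.
elim: m => [|m IH] zm; first by rewrite big_ord0; lra.
rewrite big_ord_recr /=; have [zm'|mz] := lerP z m%:R.
  by have := IH zm'; case: (_ <= z); rewrite /=; lra.
have -> : \sum_(i < m) (((i.+1)%:R <= z)%R : nat)%:R = m%:R :> R.
  rewrite -[in RHS](card_ord m) -sumr_const; apply: eq_bigr => i _.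
  by rewrite (le_trans _ (ltW mz)) // ler_nat.
by move: zm; rewrite -natr1 => zm; case: (_ <= z); rewrite /=; lra.
Qed.

Section Stairs.
Variables (T : Type) (R : realType).

Definition step_fun (c e : R) (E : nat -> set T) (m : nat) : T -> R :=
  fun t => c + e * \sum_(i < m) \1_(E i) t.

Lemma step_fun0 c e E : step_fun c e E 0 = cst c.
Proof. by apply/funext => t; rewrite /step_fun big_ord0 mulr0 addr0. Qed.

Lemma step_funS c e E m : step_fun c e E m.+1 = step_fun c e E m + e *: \1_(E m).
Proof. by apply/funext => t; rewrite /step_fun big_ord_recr mulrDr addrA. Qed.

Definition level_set (X : T -> R) (M e : R) (i : nat) := [set t | - M + i.+1%:R * e <= X t].

Definition stair (X : T -> R) (M e : R) (m : nat) := step_fun (- M) e (level_set X M e) m.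

Lemma stair_sandwich X (M e : R) m t : - M <= X t <= M -> 0 < e -> 2 * M <= m%:R * e ->
  stair X M e m t <= X t <= stair X M e m t + e.
Proof.
move=> /andP[XM1 XM2] e0 mM; set z := (X t + M) / e.
have z0 : 0 <= z by apply: divr_ge0; lra.
have zm : z <= m%:R by rewrite ler_pdivrMr //; lra.
have levelE i : (t \in level_set X M e i) = ((i.+1)%:R <= z).
  rewrite /z /level_set ler_pdivlMr //.
  by apply/idP/idP => [/set_mem /=|h]; [lra|apply/mem_set => /=; lra].
have ez : e * z = X t + M by rewrite /z mulrC divfK ?gt_eqF.
rewrite /stair /step_fun; under eq_bigr do rewrite indicE levelE.
have := ler_wpM2l (ltW e0) (sum_indicator_le (m := m) z0 (fun i _ (h : (i.+1)%:R <= z) => h)).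
have := ler_wpM2l (ltW e0) (sum_indicator_ge zm).
by rewrite mulrBr mulr1 ez; lra.
Qed.

End Stairs.

Section BoundedMeasurable.
Context {d} {T : measurableType d} {R : realType}.
Implicit Types (X Y : T -> R) (A : set T).

Lemma bdd_measD X Y : bdd_meas X -> bdd_meas Y -> bdd_meas (X + Y).
Proof.
move=> [mX [M XM]] [mY [N YN]]; split; first exact: measurable_funD.
by exists (M + N) => t; apply: le_trans (ler_normD _ _) _; exact: lerD.
Qed.

Lemma bdd_measZ a X : bdd_meas X -> bdd_meas (a *: X).
Proof.
move=> [mX [M XM]]; split; first exact: measurable_funM.
by exists (`|a| * M) => t; rewrite normrM ler_wpM2l.
Qed.

Lemma bdd_measN X : bdd_meas X -> bdd_meas (- X).
Proof. by move=> BX; rewrite -scaleN1r; exact: bdd_measZ. Qed.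

Lemma bdd_meas_cst c : bdd_meas (cst c : T -> R).
Proof. by split; [exact: measurable_cst|exists `|c|]. Qed.

Lemma bdd_meas_indic A : measurable A -> bdd_meas (\1_A : T -> R).
Proof.
move=> mA; split; first exact: measurable_indic.
by exists 1 => t; rewrite indicE; case: (_ \in _); rewrite ?normr1 ?normr0.
Qed.

Lemma bdd_meas_step c e E m : (forall i, measurable (E i)) ->
  bdd_meas (step_fun c e E m : T -> R).
Proof.
move=> mE; elim: m => [|m IH]; first by rewrite step_fun0; exact: bdd_meas_cst.
by rewrite step_funS; apply: bdd_measD IH (bdd_measZ _ (bdd_meas_indic _)).
Qed.

Lemma bdd_meas_bound X : bdd_meas X -> exists2 M, 0 <= M & forall t, - M <= X t <= M.
Proof.
move=> [_ [M XM]]; exists `|M| => // t.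
by rewrite -ler_norml (le_trans (XM t)) ?ler_norm.
Qed.

Lemma measurable_ge_set X (x : R) : measurable_fun setT X -> measurable [set s | x <= X s].
Proof.
move=> mX; rewrite -[X in measurable X]setTI.
by apply: measurable_fun_le => //; exact: measurable_cst.
Qed.

Lemma measurable_level_set X (M e : R) i :
  measurable_fun setT X -> measurable (level_set X M e i).
Proof. exact: measurable_ge_set. Qed.

Lemma bdd_meas_stair X (M e : R) m : measurable_fun setT X -> bdd_meas (stair X M e m).
Proof. by move=> mX; apply: bdd_meas_step => i; exact: measurable_level_set. Qed.

End BoundedMeasurable.

Lemma exists_natr_mul_ge (R : archiFieldType) (x e : R) : 0 < e ->
  exists m : nat, x <= m%:R * e.
Proof.
move=> e0; exists (Num.bound (`|x| / e)); rewrite -ler_pdivrMr //.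
apply: le_trans (ltW (archi_boundP _)); last by rewrite divr_ge0 // ltW.
by rewrite ler_pM2r ?invr_gt0 // ler_norm.
Qed.

(** * Mean functionals and coherent risk measures *)

Section MeanFunctional.
Context d (T : measurableType d) (R : realType).
Implicit Types (X Y : T -> R) (phi psi : (T -> R) -> R).

Definition linear_on_bdd phi :=
  (forall X Y, bdd_meas X -> bdd_meas Y -> phi (X + Y) = phi X + phi Y) /\
  (forall a X, bdd_meas X -> phi (a *: X) = a * phi X).

Definition mean_functional phi :=
  [/\ linear_on_bdd phi,
      (forall X Y, bdd_meas X -> bdd_meas Y -> (forall t, X t <= Y t) -> phi X <= phi Y) &
      forall c, phi (cst c) = c].

Lemma linear_on_bdd_step phi c e E m : linear_on_bdd phi -> (forall i, measurable (E i)) ->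
  phi (step_fun c e E m) = phi (cst c) + e * \sum_(i < m) phi \1_(E i).
Proof.
move=> [phiD phiZ] mE; elim: m => [|m IH]; first by rewrite step_fun0 big_ord0 mulr0 addr0.
rewrite step_funS phiD; last 2 first.
- exact: bdd_meas_step.
- exact/bdd_measZ/bdd_meas_indic.
by rewrite phiZ ?IH ?big_ord_recr ?mulrDr ?addrA //; exact: bdd_meas_indic.
Qed.

Lemma mean_functional_stair phi X (M e : R) m : mean_functional phi ->
  bdd_meas X -> (forall t, - M <= X t <= M) -> 0 < e -> 2 * M <= m%:R * e ->
  let S := - M + e * \sum_(i < m) phi \1_(level_set X M e i) in S <= phi X <= S + e.
Proof.
move=> [philin phi_mono phi_cst] BX XM e0 mM /=.
have Bs := bdd_meas_stair M e m BX.1.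
have phi_stair : phi (stair X M e m) = - M + e * \sum_(i < m) phi \1_(level_set X M e i).
  by rewrite /stair linear_on_bdd_step ?phi_cst // => i; exact: measurable_level_set BX.1.
rewrite -phi_stair; apply/andP; split.
  by apply: phi_mono => // t; have /andP[] := stair_sandwich (XM t) e0 mM.
have [phiD _] := philin.
rewrite -[e in _ + e]phi_cst -phiD //; last exact: bdd_meas_cst.
apply: phi_mono => //; first exact: bdd_measD Bs (bdd_meas_cst _).
by move=> t; have /andP[] := stair_sandwich (XM t) e0 mM.
Qed.

Lemma mean_functional_eq phi psi : mean_functional phi -> mean_functional psi ->
  (forall A, measurable A -> phi \1_A = psi \1_A) ->
  forall X, bdd_meas X -> phi X = psi X.
Proof.
move=> phim psim phipsi X BX; have [M M0 XM] := bdd_meas_bound BX.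
suff close e : 0 < e -> `|phi X - psi X| <= e.
  apply/eqP; rewrite -subr_eq0 -normr_le0.
  by apply/ler_addgt0Pr => e e0; rewrite add0r; exact: close.
move=> e0; have [m mM] := exists_natr_mul_ge (2 * M) e0.
have same : \sum_(i < m) phi \1_(level_set X M e i) = \sum_(i < m) psi \1_(level_set X M e i).
  by apply: eq_bigr => i _; apply: phipsi; exact: measurable_level_set BX.1.
have := mean_functional_stair phim BX XM e0 mM.
have := mean_functional_stair psim BX XM e0 mM.
by rewrite /= same ler_norml => /andP[? ?] /andP[? ?]; apply/andP; split; lra.
Qed.

End MeanFunctional.

Section Coherent.
Context d (T : measurableType d) (R : realType).
Variable rho : (T -> R) -> R.
Hypothesis rho_coh : coherent rho.

Lemma coherent_cst c : rho (cst c) = c.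
Proof.
have [_ rhoT rhoZ _] := rho_coh.
have rho0 : rho (cst 0) = 0.
  have := rhoZ (cst 0) 2 (bdd_meas_cst 0) (ltr0Sn R 1).
  have -> : (fun t => 2 * cst 0 t) = cst 0 :> (T -> R) by apply/funext => t; rewrite /= mulr0.
  lra.
rewrite -[RHS]add0r -rho0 -rhoT; last exact: bdd_meas_cst.
by congr rho; apply/funext => t; rewrite /= add0r.
Qed.

Lemma coherentZ a X : 0 < a -> bdd_meas X -> rho (a *: X) = a * rho X.
Proof. by case: rho_coh => _ _ rhoZ _ a0 BX; exact: rhoZ. Qed.

Lemma coherentD X Y : bdd_meas X -> bdd_meas Y -> rho (X + Y) <= rho X + rho Y.
Proof.
move=> BX BY; have [_ _ _ rho_cvx] := rho_coh.
have half : 0 <= (2^-1 : R) <= 1 by apply/andP; split; lra.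
have := rho_cvx X Y 2^-1 BX BY half.
set Z := fun t => _; have BZ : bdd_meas Z by apply: bdd_measD; exact: bdd_measZ.
have -> : X + Y = 2 *: Z.
  by apply/funext => t; rewrite -[LHS]/(X t + Y t) -[RHS]/(2 * Z t) /Z; field.
by rewrite coherentZ //; lra.
Qed.

Lemma dominated_linear_mean l : linear_on_bdd l -> (forall X, bdd_meas X -> l X <= rho X) ->
  mean_functional l.
Proof.
move=> llin lle; have [lD lZ] := llin; have [rho_mono _ _ _] := rho_coh.
have lN (X : T -> R) : bdd_meas X -> l (- X) = - l X by move=> BX; rewrite -scaleN1r lZ // mulN1r.
have lcst c : l (cst c) = c.
  apply/le_anti; rewrite (le_trans (lle _ (bdd_meas_cst c))) ?coherent_cst //=.
  have := lle _ (bdd_meas_cst (- c)); rewrite coherent_cst.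
  have -> : cst (- c) = - cst c :> (T -> R) by [].
  by rewrite lN; [lra|exact: bdd_meas_cst].
split => // X Y BX BY XY.
have : l (X - Y) <= 0.
  rewrite -(coherent_cst 0); apply: le_trans (lle _ (bdd_measD BX (bdd_measN BY))) _.
  apply: rho_mono => [||t]; [exact: bdd_measD BX (bdd_measN BY)|exact: bdd_meas_cst|].
  by rewrite /= subr_le0.
by rewrite lD ?lN //; [lra|exact: bdd_measN].
Qed.

End Coherent.

Section Integration.
Context d (T : measurableType d) (R : realType).
Variables (mu : {measure set T -> \bar R}) (D : set T).
Hypotheses (mD : measurable D) (muD : (mu D < +oo)%E).

Lemma bounded_integrable (f : T -> R) K : measurable_fun D f ->
  (forall t, D t -> `|f t| <= K) -> mu.-integrable D (EFin \o f).
Proof.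
move=> mf fK; apply: measurable_bounded_integrable => //.
rewrite /bounded_near; near=> M => t Dt /=.
apply: le_trans (fK _ Dt) _; near: M; apply: nbhs_pinfty_ge; exact: num_real.
Unshelve. all: end_near. Qed.

Lemma bdd_meas_integrable f : bdd_meas f -> mu.-integrable D (EFin \o f).
Proof.
move=> [mf [K fK]]; apply: (bounded_integrable (K := K)) => [|t _]; last exact: fK.
exact: measurable_funS mf.
Qed.

Lemma integral_bdd_meas f : bdd_meas f ->
  (\int[mu]_(x in D) (f x)%:E = (Rintegral mu D f)%:E)%E.
Proof. by move=> Bf; rewrite /Rintegral fineK // integrable_fin_num // bdd_meas_integrable. Qed.

Lemma Rintegral_linear : linear_on_bdd (Rintegral mu D).
Proof.
split=> [X Y BX BY|a X BX]; first by apply: RintegralD => //; exact: bdd_meas_integrable.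
by apply: RintegralZl => //; exact: bdd_meas_integrable.
Qed.

Lemma Rintegral_indic A : measurable A -> Rintegral mu D \1_A = fine (mu (A `&` D)).
Proof. by move=> mA; rewrite /Rintegral integral_indic. Qed.

End Integration.

Lemma mean_functional_Rintegral d (T : measurableType d) (R : realType) (P : probability T R) :
  mean_functional (Rintegral P setT).
Proof.
have PT : (P setT < +oo)%E by rewrite probability_setT ltry.
split.
- exact: Rintegral_linear.
- move=> X Y BX BY XY.
  by apply: le_Rintegral => //; exact: bdd_meas_integrable.
- by move=> c; rewrite Rintegral_cst // [X in fine X]probability_setT mulr1.
Qed.

(** * Value at risk and expected shortfall *)

Lemma indic_bounds (T : Type) (R : realType) (A : set T) t : - 1 <= (\1_A t : R) <= 1.
Proof. by rewrite indicE; case: (_ \in _); rewrite /= ?mulr1n ?mulr0n; apply/andP; split; lra. Qed.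

Section ExpectedShortfall.
Context d (T : measurableType d) (R : realType) (w : set T -> R) (alpha : R).
Hypotheses (capw : capacity w) (alpha01 : 0 < alpha < 1).

Lemma capacity_le A B : measurable A -> measurable B -> A `<=` B -> w A <= w B.
Proof. by case: capw => _ _; apply. Qed.

Lemma capacity_ge0 A : measurable A -> 0 <= w A.
Proof. by move=> mA; case: capw => w0 _ _; rewrite -w0 capacity_le. Qed.

Section ValueAtRisk.
Variables (X : T -> R) (M t : R).
Hypotheses (XM : forall s, - M <= X s <= M) (t01 : 0 <= t < 1).

Lemma VaR_lb x : w [set s | x <= X s] <= t -> - M < x.
Proof.
rewrite ltNge; apply: contraTN => xM.
have -> : [set s | x <= X s] = setT by apply/seteqP; split => // s _ /=; have := XM s; lra.
by case: capw => _ -> _; rewrite -ltNge; case/andP: t01.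
Qed.

Lemma VaR_le x : w [set s | x <= X s] <= t -> VaR w t X <= x.
Proof. by move=> wx; apply: ge_inf wx; exists (- M) => y /VaR_lb /ltW. Qed.

Lemma VaR_ge b : (forall x, w [set s | x <= X s] <= t -> b <= x) -> b <= VaR w t X.
Proof.
move=> hb; apply: lb_le_inf hb; exists (M + 1) => /=.
have -> : [set s | M + 1 <= X s] = set0 by apply/seteqP; split => // s /=; have := XM s; lra.
by case: capw => -> _ _; case/andP: t01.
Qed.

Lemma VaR_bound : - M <= VaR w t X <= M + 1.
Proof.
apply/andP; split; first by apply: VaR_ge => x /VaR_lb /ltW.
apply: VaR_le; have -> : [set s | M + 1 <= X s] = set0.
  by apply/seteqP; split => // s /=; have := XM s; lra.
by case: capw => -> _ _; case/andP: t01.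
Qed.

End ValueAtRisk.

Lemma VaR_nonincreasing (X : T -> R) (M t t' : R) : (forall s, - M <= X s <= M) ->
  0 <= t -> t <= t' -> t' < 1 -> VaR w t' X <= VaR w t X.
Proof.
move=> XM t0 tt' t'1.
apply: (VaR_ge XM) => [|x wx]; first by apply/andP; split; lra.
by apply: (VaR_le XM); [apply/andP; split; lra|exact: le_trans tt'].
Qed.

Lemma measurable_VaR (X : T -> R) (M : R) : (forall s, - M <= X s <= M) ->
  measurable_fun `]0, alpha[ (fun s => VaR w s X).
Proof.
move=> XM; have [a0 a1] := andP alpha01.
(* [VaR] is monotone only on [0, 1), so clamp the level before using monotonicity. *)
pose clamp s := Num.max 0 (Num.min s alpha).
have clamp01 s : 0 <= clamp s < 1.
  by rewrite le_max lexx gt_max ltr01 gt_min a1 orbT.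
have mclamp : measurable_fun `]0, alpha[ (fun s => VaR w (clamp s) X).
  apply: nonincreasing_measurable => // x y xy.
  have /andP[cx0 _] := clamp01 x; have /andP[_ cy1] := clamp01 y.
  exact: VaR_nonincreasing XM cx0 (le_max2 (lexx 0) (le_min2 xy (lexx alpha))) cy1.
apply: eq_measurable_fun mclamp => s; rewrite inE /= in_itv /= => /andP[s0 sa].
by rewrite /clamp min_l ?max_r // ltW.
Qed.

Let lebesgue_measure_Ioo : lebesgue_measure (`]0, alpha[%classic : set R) = alpha%:E.
Proof. by have [a0 _] := andP alpha01; rewrite lebesgue_measure_itv /= lte_fin a0 -EFinD subr0. Qed.

Let lebesgue_measure_Ioo_fin : (lebesgue_measure (`]0%R, alpha[%classic : set R) < +oo)%E.
Proof. by rewrite [X in (X < _)%E]lebesgue_measure_Ioo ltry. Qed.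

Lemma integrable_VaR (X : T -> R) (M : R) : (forall s, - M <= X s <= M) -> 0 <= M ->
  lebesgue_measure.-integrable `]0, alpha[ (EFin \o fun s => VaR w s X).
Proof.
move=> XM M0; have [a0 a1] := andP alpha01.
apply: (@bounded_integrable _ _ _ lebesgue_measure _ _ _ _ (M + 1)).
- exact: measurable_itv.
- exact: lebesgue_measure_Ioo_fin.
- exact: measurable_VaR XM.
move=> s; rewrite /= in_itv /= => /andP[s0 sa].
have /andP[] := @VaR_bound X M s XM ltac:(apply/andP; split; lra).
by rewrite ler_norml; lra.
Qed.

Let measurable_lt_set (a : R) : measurable [set s : R | s < a].
Proof.
rewrite (_ : [set s | s < a] = `]-oo, a[%classic); first exact: measurable_itv.
by apply/seteqP; split => s; rewrite /= in_itv.
Qed.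

Lemma Rintegral_indic_lt (a : R) : 0 <= a ->
  Rintegral lebesgue_measure `]0, alpha[ \1_([set s : R | s < a]) = Num.min a alpha.
Proof.
move=> a0; have [alpha0 _] := andP alpha01.
rewrite (Rintegral_indic lebesgue_measure (measurable_itv `]0, alpha[) (measurable_lt_set a)).
have -> : [set s : R | s < a] `&` `]0, alpha[ = `]0, Num.min a alpha[%classic.
  apply/seteqP; split => s /=; rewrite !in_itv /= lt_min.
    by case=> -> /andP[-> ->].
  by move=> /andP[-> /andP[-> ->]].
rewrite [X in fine X]lebesgue_measure_itv /= lte_fin.
case: ifPn => [_|]; first by rewrite -EFinD subr0.
by rewrite -leNgt => h; apply/le_anti; rewrite h le_min a0 ltW.
Qed.

Lemma VaR_ge_stair (X : T -> R) (M e : R) m s : bdd_meas X -> (forall t, - M <= X t <= M) ->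
  0 < e -> 0 <= s < 1 ->
  - M + e * \sum_(i < m) \1_([set r : R | r < w (level_set X M e i)]) s <= VaR w s X.
Proof.
move=> BX XM e0 s01; apply: (VaR_ge XM s01) => x wx.
have z0 : 0 <= (x + M) / e by apply: divr_ge0; have := VaR_lb XM s01 wx; lra.
have levels i : (i < m)%N -> s \in [set r | r < w (level_set X M e i)] ->
    i.+1%:R <= (x + M) / e.
  move=> _ /set_mem /= swA; rewrite ler_pdivlMr // leNgt; apply/negP => hx.
  have : w (level_set X M e i) <= w [set s | x <= X s].
    apply: capacity_le; [exact: measurable_level_set BX.1|exact: measurable_ge_set BX.1|].
    by move=> r; rewrite /level_set /= => h; lra.
  lra.
have := ler_wpM2l (ltW e0) (sum_indicator_le z0 levels).
rewrite [e * (_ / e)]mulrC divfK ?gt_eqF //.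
under [in X in X -> _]eq_bigr do rewrite -indicE.
lra.
Qed.

Lemma ES_ge_stair (X : T -> R) (M e : R) m : bdd_meas X -> (forall t, - M <= X t <= M) ->
  0 <= M -> 0 < e ->
  - M + e * \sum_(i < m) Num.min (w (level_set X M e i)) alpha / alpha <= ES w alpha X.
Proof.
move=> BX XM M0 e0; have [a0 a1] := andP alpha01.
pose E i := [set s : R | s < w (level_set X M e i)].
have mE i : measurable (E i) by exact: measurable_lt_set.
have stepE : Rintegral lebesgue_measure `]0, alpha[ (step_fun (- M) e E m) =
    (- M + e * \sum_(i < m) Num.min (w (level_set X M e i)) alpha / alpha) * alpha.
  rewrite linear_on_bdd_step //; last exact: Rintegral_linear.
  rewrite Rintegral_cst // [X in fine X]lebesgue_measure_Ioo mulrDl -mulrA mulr_suml.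
  congr (_ + e * _); apply: eq_bigr => i _.
  rewrite divfK ?gt_eqF // /E Rintegral_indic_lt //.
  exact/capacity_ge0/measurable_level_set/BX.1.
rewrite /ES ler_pdivlMr // -stepE.
apply: le_Rintegral => //.
- by apply: bdd_meas_integrable => //; exact: bdd_meas_step.
- exact: integrable_VaR.
move=> s; rewrite /= in_itv /= => /andP[s0 sa].
by apply: VaR_ge_stair => //; apply/andP; split; lra.
Qed.

Lemma VaR_indic_le A s : 0 <= s < 1 -> VaR w s \1_A <= \1_([set r : R | r < w A]) s.
Proof.
move=> s01; have IM := @indic_bounds _ R A.
apply/ler_addgt0Pr => e e0; rewrite indicE.
case: (boolP (s \in _)) => [_|]; rewrite /= ?mulr1n ?mulr0n.
  apply: (VaR_le IM s01); have -> : [set r | 1 + e <= \1_A r] = set0.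
    by apply/seteqP; split => // r /=; have := IM r; lra.
  by case: capw => -> _ _; case/andP: s01.
move=> /negP sA; have wAs : w A <= s.
  by rewrite leNgt; apply: contra_notN sA => ?; exact/mem_set.
apply: (@le_trans _ _ (Num.min e 1)); last by rewrite add0r ge_min lexx.
apply: (VaR_le IM s01); suff -> : [set r | Num.min e 1 <= \1_A r] = A by [].
have e1 : 0 < Num.min e 1 by rewrite lt_min e0 ltr01.
apply/seteqP; split => r /=; rewrite indicE.
  by case: (boolP (r \in A)) => [/set_mem //|_]; rewrite /= mulr0n; lra.
by move=> Ar; rewrite mem_set //= mulr1n ge_min lexx orbT.
Qed.

Lemma ES_indic_le A : measurable A -> ES w alpha \1_A <= w A / alpha.
Proof.
move=> mA; have [a0 a1] := andP alpha01; have IM := @indic_bounds _ R A.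
rewrite /ES ler_pM2r ?invr_gt0 //.
apply: (@le_trans _ _ (Rintegral lebesgue_measure `]0, alpha[ \1_([set s : R | s < w A]))).
  apply: le_Rintegral => //.
  - exact: integrable_VaR IM ler01.
  - by apply: bdd_meas_integrable => //; exact: bdd_meas_indic (measurable_lt_set _).
  move=> s; rewrite /= in_itv /= => /andP[s0 sa].
  by apply: VaR_indic_le; apply/andP; split; lra.
by rewrite Rintegral_indic_lt ?capacity_ge0 // ge_min lexx.
Qed.

End ExpectedShortfall.

Lemma indicU_disjoint (T : Type) (R : pzRingType) (A B : set T) : A `&` B = set0 ->
  \1_(A `|` B) = \1_A + \1_B :> (T -> R).
Proof.
move=> AB; apply/funext => t; transitivity (\1_A t + \1_B t : R) => //.
have : ~~ ((t \in A) && (t \in B)).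
  by apply/negP => /andP[/set_mem tA /set_mem tB]; have : (A `&` B) t by []; rewrite AB.
by rewrite !indicE in_setU; case: (t \in A); case: (t \in B); rewrite //= ?add0r ?addr0.
Qed.

(** * Probabilities from linear functionals below ES *)

Section FunctionalMeasure.
Context d (T : measurableType d) (R : realType) (w : set T -> R) (alpha : R).
Hypotheses (cw : continuous_capacity w) (alpha01 : 0 < alpha < 1).
Hypothesis coh : coherent (ES w alpha).
Variable l : (T -> R) -> R.
Hypotheses (llin : linear_on_bdd l) (lle : forall X, bdd_meas X -> l X <= ES w alpha X).

Let lmean : mean_functional l := dominated_linear_mean coh llin lle.

Lemma functional_indic_ge0 A : measurable A -> 0 <= l \1_A.
Proof.
move=> mA; have [_ lmono lcst] := lmean; rewrite -(lcst 0).
apply: lmono => [||t]; [exact: bdd_meas_cst|exact: bdd_meas_indic|].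
by rewrite indicE.
Qed.

Lemma functional_indic_le A : measurable A -> l \1_A <= w A / alpha.
Proof. by move=> mA; apply: le_trans (lle (bdd_meas_indic mA)) (ES_indic_le cw.1 alpha01 mA). Qed.

Lemma functional_indicU A B : measurable A -> measurable B -> A `&` B = set0 ->
  l \1_(A `|` B) = l \1_A + l \1_B.
Proof.
move=> mA mB AB; have [[lD _] _ _] := lmean.
by rewrite indicU_disjoint // lD //; exact: bdd_meas_indic.
Qed.

(* The positive part only matters on non-measurable sets, where [l] is unconstrained. *)
Definition functional_measure (A : set T) : \bar R := (Num.max (l \1_A) 0)%:E.

Lemma functional_measureE A : measurable A -> functional_measure A = (l \1_A)%:E.
Proof. by move=> mA; rewrite /functional_measure max_l // functional_indic_ge0. Qed.

Lemma functional_measure0 : functional_measure set0 = 0%E.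
Proof. by have [_ _ lcst] := lmean; rewrite functional_measureE // indic0 lcst. Qed.

Lemma functional_measure_ge0 A : (0 <= functional_measure A)%E.
Proof. by rewrite lee_fin le_max lexx orbT. Qed.

Section SigmaAdditivity.
Variable F : nat -> set T.
Hypotheses (mF : forall i, measurable (F i)) (tF : trivIset setT F).

Let U n := \big[setU/set0]_(i < n) F i.

Let mU n : measurable (U n).
Proof. by apply: bigsetU_measurable => i _; exact: mF. Qed.

Let US n : U n.+1 = U n `|` F n.
Proof. by rewrite /U big_ord_recr. Qed.

Lemma functional_indic_bigsetU n : l \1_(U n) = \sum_(i < n) l \1_(F i).
Proof.
have [_ _ lcst] := lmean; elim: n => [|n IH]; first by rewrite /U !big_ord0 indic0 lcst.
rewrite US functional_indicU // ?IH ?big_ord_recr //.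
by apply/(@trivIset_bigsetUI _ predT) => //; rewrite /predT /= trueE.
Qed.

Lemma functional_indic_bigcup_cvg : measurable (\bigcup_n F n) ->
  l \1_(U n) @[n --> \oo] --> l \1_(\bigcup_n F n).
Proof.
move=> mV; set V := \bigcup_n F n; pose A n := V `\` U n.
have mA n : measurable (A n) by exact: measurableD.
have decomp n : l \1_V = l \1_(U n) + l \1_(A n).
  rewrite -functional_indicU ?setDUK ?setDIK // => x Ux.
  by have [i _ Fi] := bigsetU_bigcup Ux; exists i.
have wA : w (A n) @[n --> \oo] --> 0.
  apply: cw.2 => // [n x [Vx Un1x]|]; first by split=> // Unx; apply: Un1x; rewrite US; left.
  apply/seteqP; split => // x Ax; have [[i _ Fi] _] := Ax 0%N I.
  by have [_] := Ax i.+1 I; apply; rewrite US; right.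
have [a0 _] := andP alpha01.
apply: (@squeeze_cvgr _ _ _ _ (fun n => l \1_V - w (A n) / alpha) (fun n => l \1_V)).
- apply: nearW => n /=; have := decomp n.
  by have := functional_indic_ge0 (mA n); have := functional_indic_le (mA n); lra.
- rewrite -[X in _ --> X]subr0; apply: cvgB; first exact: cvg_cst.
  by rewrite -(mul0r alpha^-1); exact: cvgMr_tmp.
- exact: cvg_cst.
Qed.

End SigmaAdditivity.

Lemma functional_measure_sigma_additive : semi_sigma_additive functional_measure.
Proof.
move=> F mF tF mV; rewrite functional_measureE //.
have -> : (fun n => \sum_(0 <= i < n) functional_measure (F i)) =
          (fun n => (l \1_(\big[setU/set0]_(i < n) F i))%:E).
  apply/funext => n; rewrite functional_indic_bigsetU // big_mkord -sumEFin.
  by apply: eq_bigr => i _; rewrite functional_measureE.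
by apply: cvg_EFin; [exact: nearW|exact: functional_indic_bigcup_cvg].
Qed.

Lemma functional_probability : exists P : probability T R,
  forall A, measurable A -> P A = (l \1_A)%:E.
Proof.
have [_ _ lcst] := lmean.
have PT : functional_measure setT = 1%E by rewrite functional_measureE // indicT lcst.
pose M : {measure set T -> \bar R} := HB.pack functional_measure
  (isMeasure.Build _ _ _ functional_measure functional_measure0 functional_measure_ge0
     functional_measure_sigma_additive).
pose P : probability T R := HB.pack_for (probability T R) (Measure.sort M)
  (Measure_isProbability.Build _ _ _ M PT).
by exists P => A mA; exact: functional_measureE.
Qed.

End FunctionalMeasure.

Lemma Rintegral_le_ES d (T : measurableType d) (R : realType) (w : set T -> R) (alpha : R)
    (P : probability T R) : capacity w -> 0 < alpha < 1 ->
  (forall A, measurable A -> (P A <= (w A / alpha)%:E)%E) ->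
  forall X, bdd_meas X -> Rintegral P setT X <= ES w alpha X.
Proof.
move=> capw alpha01 Pw X BX; have [M M0 XM] := bdd_meas_bound BX.
have [a0 _] := andP alpha01.
apply/ler_addgt0Pr => e e0; have [m mM] := exists_natr_mul_ge (2 * M) e0.
have /andP[_] := mean_functional_stair (mean_functional_Rintegral P) BX XM e0 mM.
have := ES_ge_stair capw alpha01 m BX XM M0 e0.
suff : \sum_(i < m) Rintegral P setT \1_(level_set X M e i) <=
       \sum_(i < m) Num.min (w (level_set X M e i)) alpha / alpha.
  by move=> /(ler_wpM2l (ltW e0)); lra.
apply: ler_sum => i _; have mA := measurable_level_set M e i BX.1.
have PA : P (level_set X M e i) \is a fin_num by exact: fin_num_measure.
rewrite Rintegral_indic // setIT ler_pdivlMr // le_min.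
have := Pw _ mA; have := probability_le1 P mA; rewrite -(fineK PA) !lee_fin => P1 Pw'.
by rewrite -ler_pdivlMr // Pw' /= -[X in _ <= X]mul1r ler_wpM2r // ltW.
Qed.

Theorem proposition10 (d : measure_display) (T : measurableType d) (R : realType)
  (w : set T -> R) (alpha : R) :
  continuous_capacity w -> 0 < alpha < 1 -> coherent (ES w alpha) ->
  forall X : T -> R, bdd_meas X ->
    ((ES w alpha X)%:E =
     ereal_sup [set e : \bar R | exists Q : probability T R,
        (forall A, measurable A -> Q A <= (w A / alpha)%:E)%E /\
        e = \int[Q]_x (X x)%:E])%E.
Proof.
move=> cw alpha01 coh X BX.
have PT (P : probability T R) : (P setT < +oo)%E by rewrite probability_setT ltry.
apply/le_anti/andP; split.
  have [l [lD lZ lle lX]] := hahn_banach (bdd_meas_cst 0) bdd_measD bdd_measZ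
    (coherentD coh) (coherentZ coh) BX.
  have llin : linear_on_bdd l by split.
  have [P PE] := functional_probability cw alpha01 coh llin lle.
  apply: ereal_sup_ubound; exists P; split.
    by move=> A mA; rewrite PE // lee_fin functional_indic_le.
  suff IX : Rintegral P setT X = ES w alpha X by rewrite -IX integral_bdd_meas // PT.
  rewrite -lX; apply: mean_functional_eq BX => [||A mA].
  - exact: mean_functional_Rintegral.
  - by have := dominated_linear_mean coh llin lle.
  - by rewrite Rintegral_indic // setIT [X in fine X]PE.
apply: ge_ereal_sup => _ [P [Pw ->]].
have := Rintegral_le_ES cw.1 alpha01 Pw BX; rewrite -lee_fin.
by rewrite integral_bdd_meas // PT.
Qed.
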